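(* Let $k:\mathbb R\to[0,\infty)$ be continuous with $\int_{\mathbb R}k(x)\,dx=1$, satisfying (K1) there is $\lambda>0$ with $\int_{\mathbb R}k(x)e^{\lambda|x|}dx<+\infty$, and (K2) $k(x_1)>0$ and $k(x_2)>0$ for some $x_1>0$, $x_2<0$. Let $f\in C^1([0,1])$ satisfy (H): $f(0)=f(1)=0$, $f(u)>0$ for $u\in(0,1)$, $f'(0)>0$, and $f(u)\leqslant f'(0)u$ for $u\in(0,1)$. Define \[ c_l^*=\sup_{\lambda<0}\Big\{\lambda^{-1}\Big[\int_{\mathbb R}k(x)e^{\lambda x}dx-1+f'(0)\Big]\Big\},\qquad c_r^*=\inf_{\lambda>0}\Big\{\lambda^{-1}\Big[\int_{\mathbb R}k(x)e^{\lambda x}dx-1+f'(0)\Big]\Big\}, \] and $E(k)=\operatorname{sign}(J(k))\big[1-\inf_{\lambda\in\mathbb R}\int_{\mathbb R}k(x)e^{\lambda x}dx\big]$ with $J(k)=\int_{\mathbb R}k(x)x\,dx$. Then: (i) if $E(k)>f'(0)$, then $0<c_l^*<c_r^*$; (ii) if $E(k)=f'(0)$, then $0=c_l^*<c_r^*$; (iii) if $-f'(0)<E(k)<f'(0)$, then $c_l^*<0<c_r^*$; (iv) if $E(k)=-f'(0)$, then $c_l^*<c_r^*=0$; (v) if $E(k)<-f'(0)$, then $c_l^*<c_r^*<0$.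
   Context: $\operatorname{sign}(0)=0$. When $\int_{\mathbb R}k(x)e^{\lambda x}dx=+\infty$ the bracketed expressions are $+\infty$. The quantities $c_l^*$ and $c_r^*$ are the spreading speeds to the left and to the right of the equation $u_t=\int_{\mathbb R}k(x-y)u(t,y)dy-u+f(u)$. *)

From HB Require Import structures.
From mathcomp Require Import all_boot all_order all_algebra.
From mathcomp Require Import all_classical all_reals all_analysis.
Set Implicit Arguments. Unset Strict Implicit. Unset Printing Implicit Defensive.
Import Order.TTheory GRing.Theory Num.Theory.
Import numFieldNormedType.Exports.
Local Open Scope classical_set_scope.
Local Open Scope ring_scope.

Section Defs.
Variable R : realType.

Definition kM (k : R -> R) (lam : R) : \bar R :=
  (\int[lebesgue_measure]_x (k x * expR (lam * x))%:E)%E.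

Definition Jk (k : R -> R) : R := Rintegral lebesgue_measure setT (fun x => k x * x).

Definition Ek (k : R -> R) : R :=
  Num.sg (Jk k) * (1 - fine (ereal_inf [set kM k lam | lam in [set: R]])).

Definition speed_expr (k : R -> R) (a lam : R) : \bar R :=
  ((lam^-1)%:E * (kM k lam - 1%:E + a%:E))%E.

Definition c_left (k : R -> R) (a : R) : \bar R :=
  ereal_sup [set speed_expr k a lam | lam in [set lam : R | lam < 0]].

Definition c_right (k : R -> R) (a : R) : \bar R :=
  ereal_inf [set speed_expr k a lam | lam in [set lam : R | 0 < lam]].

(* fp is the derivative of f on [0,1] (one-sided at the endpoints),
   and fp is continuous on [0,1]: f is C^1([0,1]) with f' = fp *)
Definition C1_01 (f fp : R -> R) : Prop :=
  (forall x, 0 <= x <= 1 ->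
     (fun h => (f (x + h) - f x) / h) @
        within [set h : R | h != 0 /\ 0 <= x + h <= 1] (nbhs (0:R)) --> fp x)
  /\ {within `[0, 1], continuous fp}.
End Defs.

From HB Require Import structures.
From mathcomp Require Import all_boot all_order all_algebra.
From mathcomp Require Import all_classical all_reals all_analysis.
From mathcomp Require Import ring lra measurable_realfun.
Set Implicit Arguments.
Unset Strict Implicit.
Unset Printing Implicit Defensive.
Import Order.TTheory GRing.Theory Num.Theory.
Import numFieldNormedType.Exports.
Local Open Scope classical_set_scope.
Local Open Scope ring_scope.

(* Only the moment function M(l) = \int k(x) e^{l x} dx and a = f'(0) enter the
   speeds.  M(0) = 1, M lies above its tangent 1 + l J(k) at 0 (since
   e^y >= 1 + y), and M grows superlinearly as l -> +-oo because k is positive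
   somewhere on each side of 0.  For l < 0 the speed (M(l) - 1 + a) / l is then
   below J(k) - a / L on [-L, 0) and below J(k) - 1 on (-oo, -L] for L large,
   so c_l^* < J(k); the reflection l -> -l, which swaps c_l^* with -c_r^* and
   J with -J, gives J(k) < c_r^*.  When J(k) > 0, M >= 1 on [0, oo), so the
   sign of c_l^* is that of 1 - a - inf M, i.e. of E(k) - a; the case
   J(k) < 0 is the mirror image, and for J(k) = 0 we are left with
   c_l^* < 0 < c_r^*. *)

Section Speeds.
Variable R : realType.
Implicit Types (M : R -> \bar R) (a l r : R).

Definition speed M a l : \bar R := ((l^-1)%:E * (M l - 1%:E + a%:E))%E.

Definition left_speed M a := ereal_sup [set speed M a l | l in [set l | l < 0]].

Definition right_speed M a := ereal_inf [set speed M a l | l in [set l | 0 < l]].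

Definition inf_value M := ereal_inf (range M).

Record moment_profile M (J : R) : Prop := MomentProfile {
  moment0 : M 0 = 1%:E;
  moment_ge0 : forall l, (0%:E <= M l)%E;
  moment_ge_tangent : forall l, ((1 + l * J)%:E <= M l)%E;
  moment_superlinearN : forall B, exists2 L, 0 < L &
    forall l, l <= - L -> ((1 - B * l)%:E <= M l)%E;
  moment_superlinearP : forall B, exists2 L, 0 < L &
    forall l, L <= l -> ((1 + B * l)%:E <= M l)%E }.

Definition speed_regimes (a E : R) (cl cr : \bar R) : Prop :=
  [/\ a < E -> (0%:E < cl /\ cl < cr)%E,
      E = a -> (cl = 0%:E /\ cl < cr)%E,
      - a < E < a -> (cl < 0%:E /\ 0%:E < cr)%E,
      E = - a -> (cl < cr /\ cr = 0%:E)%E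
    & E < - a -> (cl < cr /\ cr < 0%:E)%E].

Lemma speed_fin M a l r : M l = r%:E -> speed M a l = ((r - 1 + a) / l)%:E.
Proof. by move=> Ml; rewrite /speed Ml -EFinB -EFinD -EFinM mulrC. Qed.

Lemma speed_pinftyN M a l : l < 0 -> M l = +oo%E -> speed M a l = -oo%E.
Proof.
by move=> l_lt0 Ml; rewrite /speed Ml /= mulry ltr0_sg ?invr_lt0 // EFinN mulN1e.
Qed.

Lemma le_left_speed M a l : l < 0 -> (speed M a l <= left_speed M a)%E.
Proof. by move=> l_lt0; apply: ereal_sup_ubound; exists l. Qed.

Lemma inf_value_le M l : (inf_value M <= M l)%E.
Proof. by apply: ereal_inf_lbound; exists l. Qed.

Lemma ge_fin_ereal_cases (x : \bar R) r0 : (r0%:E <= x)%E ->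
  x = +oo%E \/ exists2 r, x = r%:E & r0 <= r.
Proof. by case: x => [r| |] //= r0r; [right; exists r | left]. Qed.

Lemma left_speed_reflect M a :
  left_speed (fun l => M (- l)) a = (- right_speed M a)%E.
Proof.
rewrite /right_speed /ereal_inf oppeK; congr ereal_sup.
apply/seteqP; split => x /=.
- move=> [l l_lt0 <-]; exists (speed M a (- l)); first by exists (- l); rewrite ?oppr_gt0.
  by rewrite /speed invrN EFinN mulNe oppeK.
- move=> [_ [l l_gt0 <-] <-]; exists (- l); first by rewrite /= oppr_lt0.
  by rewrite /speed opprK invrN EFinN mulNe.
Qed.

Lemma right_speed_reflect M a :
  right_speed (fun l => M (- l)) a = (- left_speed M a)%E.
Proof.
have := left_speed_reflect (fun l => M (- l)) a.
rewrite (_ : (fun l => M (- - l)) = M) => [->|]; first by rewrite oppeK.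
by apply/funext => l; rewrite opprK.
Qed.

Lemma inf_value_reflect M : inf_value (fun l => M (- l)) = inf_value M.
Proof.
congr ereal_inf; apply/seteqP; split => _ [l _ <-]; exists (- l) => //.
by rewrite opprK.
Qed.

Lemma moment_profile_reflect M J :
  moment_profile M J -> moment_profile (fun l => M (- l)) (- J).
Proof.
case=> M0 M_ge0 Mtan MN MP; split => [|l|l|B|B]; rewrite ?oppr0 //.
- by rewrite mulrN -mulNr.
- have [L L_gt0 ML] := MP B; exists L => // l lL.
  by move: (ML (- l)); rewrite mulrN; apply; rewrite lerNr.
- have [L L_gt0 ML] := MN B; exists L => // l lL.
  by move: (ML (- l)); rewrite mulrN opprK; apply; rewrite lerN2.
Qed.

Lemma moment_inf_value_fin M J : moment_profile M J ->
  exists2 mu, inf_value M = mu%:E & 0 <= mu <= 1.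
Proof.
case=> M0 M_ge0 _ _ _.
have inf_ge0 : (0%:E <= inf_value M)%E by apply/ereal_infP => _ [l _ <-].
have := inf_value_le M 0; rewrite M0.
case: (inf_value M) inf_ge0 => [mu| |] //=; rewrite !lee_fin => mu_ge0 mu_le1.
by exists mu => //; apply/andP.
Qed.

Section LeftSpeed.
Variables (M : R -> \bar R) (J a : R).
Hypothesis M_ge_tangent : forall l, ((1 + l * J)%:E <= M l)%E.

Lemma inf_value_lt_fin x : (inf_value M < x%:E)%E ->
  exists l r, [/\ M l = r%:E, r < x & 1 + l * J <= r].
Proof.
move=> /ereal_inf_lt [_ [l _ <-] Mlx].
have [Ml|[r Ml r_ge]] := ge_fin_ereal_cases (M_ge_tangent l); first by rewrite Ml in Mlx.
by exists l, r; split => //; rewrite -lte_fin -Ml.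
Qed.

Lemma left_speed_gt0 : 0 < a -> 0 < J -> (inf_value M < (1 - a)%:E)%E ->
  (0%:E < left_speed M a)%E.
Proof.
move=> a_gt0 J_gt0 /inf_value_lt_fin [l [r [Ml r_lt r_ge]]].
have l_lt0 : l < 0 by rewrite -(pmulr_llt0 _ J_gt0); lra.
apply: (lt_le_trans _ (le_left_speed M a l_lt0)).
by rewrite (speed_fin a Ml) lte_fin ltr_ndivlMr // mul0r; lra.
Qed.

Lemma left_speed_eq0 : 0 < a -> 0 < J -> inf_value M = (1 - a)%:E ->
  left_speed M a = 0%:E.
Proof.
move=> a_gt0 J_gt0 inf_eq; apply/eqP; rewrite eq_le; apply/andP; split.
  apply/ereal_supP => _ [l /= l_lt0 <-].
  have [Ml|[r Ml _]] := ge_fin_ereal_cases (M_ge_tangent l).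
    by rewrite speed_pinftyN ?leNye.
  have := inf_value_le M l; rewrite inf_eq Ml lee_fin => r_ge.
  by rewrite (speed_fin a Ml) lee_fin ler_ndivrMr // mul0r; lra.
apply/lee_subgt0Pr => e e_gt0; rewrite sub0e.
(* A point with [M l < 1 - a + d] has [l J < -a / 2], hence a speed [> d / l >= -e]. *)
pose d := Num.min (a / 2) (e * a / (2 * J)).
have d_gt0 : 0 < d by rewrite lt_min !divr_gt0 ?mulr_gt0.
have d_le : d <= a / 2 by rewrite ge_min lexx.
have dJ_le : d * (2 * J) <= e * a by rewrite -ler_pdivlMr ?mulr_gt0 // ge_min lexx orbT.
have /inf_value_lt_fin [l [r [Ml r_lt r_ge]]] : (inf_value M < (1 - a + d)%:E)%E.
  by rewrite inf_eq lte_fin; lra.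
have l_lt0 : l < 0 by rewrite -(pmulr_llt0 _ J_gt0); lra.
have := inf_value_le M l; rewrite inf_eq Ml lee_fin => r_ge'.
apply: (le_trans _ (le_left_speed M a l_lt0)).
rewrite (speed_fin a Ml) lee_fin ler_ndivlMr //.
have : e * a < e * (- 2 * l * J) by rewrite ltr_pM2l //; nra.
nra.
Qed.

Hypothesis M_superlinearN : forall B, exists2 L, 0 < L &
  forall l, l <= - L -> ((1 - B * l)%:E <= M l)%E.

(* Near 0 the bound with margin [g] gives speeds below [c - g / L];
   beyond [-L] superlinear growth gives speeds below [c - 1]. *)
Lemma left_speed_lt c g : 0 < a -> 0 < g ->
  (forall l, l < 0 -> ((1 - a + c * l + g)%:E <= M l)%E) ->
  (left_speed M a < c%:E)%E.
Proof.
move=> a_gt0 g_gt0 M_ge.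
have [L L_gt0 ML] := M_superlinearN (1 - c).
pose d := Num.min 1 (g / L).
have d_gt0 : 0 < d by rewrite lt_min ltr01 divr_gt0.
have d_le1 : d <= 1 by rewrite ge_min lexx.
have dL_le : d * L <= g by rewrite -ler_pdivlMr // ge_min lexx orbT.
apply: (@le_lt_trans _ _ (c - d)%:E); last by rewrite lte_fin; lra.
apply/ereal_supP => _ [l /= l_lt0 <-].
have [Ml|[r Ml r_ge]] := ge_fin_ereal_cases (M_ge l l_lt0).
  by rewrite speed_pinftyN ?leNye.
rewrite (speed_fin a Ml) lee_fin ler_ndivrMr //.
have [lL|lL] := leP l (- L); last nra.
by have := ML l lL; rewrite Ml lee_fin; nra.
Qed.

Lemma left_speed_lt_mean : 0 < a -> (left_speed M a < J%:E)%E.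
Proof.
move=> a_gt0; apply: (left_speed_lt a_gt0 a_gt0) => l _.
by rewrite (_ : _ + _ = 1 + l * J) // mulrC; lra.
Qed.

Hypothesis M0 : M 0 = 1%:E.

Lemma left_speed_lt0 : 0 < a -> ((1 - a)%:E < inf_value M)%E ->
  (left_speed M a < 0%:E)%E.
Proof.
move=> a_gt0; have := inf_value_le M 0; rewrite M0.
case inf_eq: (inf_value M) => [mu| |] //= _; rewrite lte_fin => mu_gt.
apply: (@left_speed_lt 0 (mu - 1 + a) a_gt0); first by lra.
move=> l _; apply: le_trans (inf_value_le M l).
by rewrite inf_eq lee_fin mul0r; lra.
Qed.
End LeftSpeed.

Lemma right_speed_gt_mean M J a : 0 < a -> moment_profile M J ->
  (J%:E < right_speed M a)%E.
Proof.
move=> a_gt0 /moment_profile_reflect [_ _ Mtan MN _].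
by have := left_speed_lt_mean Mtan MN a_gt0; rewrite left_speed_reflect EFinN lteN2.
Qed.

Lemma speed_regimes_mean_ge0 M J a : 0 < a -> moment_profile M J -> 0 <= J ->
  speed_regimes a (Num.sg J * (1 - fine (inf_value M)))
    (left_speed M a) (right_speed M a).
Proof.
move=> a_gt0 MP; have [M0 _ Mtan MN _] := MP.
have cl_lt_J := left_speed_lt_mean Mtan MN a_gt0.
have J_lt_cr := right_speed_gt_mean a_gt0 MP.
have cl_lt_cr := lt_trans cl_lt_J J_lt_cr.
have [mu inf_eq /andP[mu_ge0 mu_le1]] := moment_inf_value_fin MP.
rewrite inf_eq /= le_eqVlt => /predU1P[J_eq0|J_gt0].
  rewrite -J_eq0 sgr0 mul0r in cl_lt_J J_lt_cr *.
  by split=> E_eq; try (exfalso; lra).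
rewrite gtr0_sg // mul1r; split=> E_eq; try (exfalso; lra).
- split=> //; apply: left_speed_gt0 Mtan a_gt0 J_gt0 _.
  by rewrite inf_eq lte_fin; lra.
- split=> //; apply: left_speed_eq0 Mtan a_gt0 J_gt0 _.
  by rewrite inf_eq; congr EFin; lra.
- split; last by apply: lt_trans J_lt_cr; rewrite lte_fin.
  by apply: left_speed_lt0 MN M0 a_gt0 _; rewrite inf_eq lte_fin; lra.
Qed.

Lemma speed_regimesN a E cl cr :
  speed_regimes a (- E) (- cr) (- cl) -> speed_regimes a E cl cr.
Proof.
case=> reg1 reg2 reg3 reg4 reg5; split=> E_eq.
- by have [] := reg5 _; rewrite ?ltrN2 // lteN2 oppe_lt0.
- have [] := reg4 _; first by rewrite E_eq.
  by rewrite lteN2 => ? /eqP; rewrite oppe_eq0 => /eqP.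
- have [] := reg3 _; first by rewrite ltrN2 ltrNl andbC.
  by rewrite oppe_lt0 oppe_gt0.
- have [] := reg2 _; first by rewrite E_eq opprK.
  by move=> /eqP; rewrite oppe_eq0 lteN2 => /eqP.
- have [] := reg1 _; first by rewrite ltrNr.
  by rewrite oppe_gt0 lteN2.
Qed.

Lemma moment_speed_regimes M J a : 0 < a -> moment_profile M J ->
  speed_regimes a (Num.sg J * (1 - fine (inf_value M)))
    (left_speed M a) (right_speed M a).
Proof.
move=> a_gt0 MP; have [J_ge0|J_lt0] := leP 0 J.
  exact: speed_regimes_mean_ge0.
apply: speed_regimesN.
have := speed_regimes_mean_ge0 a_gt0 (moment_profile_reflect MP).
rewrite left_speed_reflect right_speed_reflect inf_value_reflect sgrN mulNr.
by apply; rewrite oppr_ge0 ltW.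
Qed.

End Speeds.

Lemma integrable_continuous_ge0 (R : realType) (f : R -> R) :
  continuous f -> (forall x, 0 <= f x) ->
  (\int[lebesgue_measure]_x (f x)%:E < +oo)%E ->
  lebesgue_measure.-integrable setT (EFin \o f).
Proof.
move=> f_cont f_ge0 f_fin; apply/integrableP; split.
  by apply/measurable_EFinP; exact: continuous_measurable_fun.
by under eq_integral => x _ do rewrite /= ger0_norm //.
Qed.

Lemma expR_superlinear (R : realType) (C b B : R) : 0 < C -> 0 < b ->
  exists2 L, 0 < L & forall t, L <= t -> 1 + B * t <= C * expR (t * b).
Proof.
move=> C_gt0 b_gt0.
pose D := C * b ^+ 2 / 2.
have D_gt0 : 0 < D by rewrite !mulr_gt0 ?exprn_gt0.
have ratio_ge0 : 0 <= (1 + `|B|) / D by rewrite divr_ge0 ?addr_ge0 ?normr_ge0 ?ltW.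
have ratioK : (1 + `|B|) / D * D = 1 + `|B| by rewrite divfK ?gt_eqF.
exists (1 + (1 + `|B|) / D) => [|t Lt]; first lra.
have tb_ge0 : 0 <= t * b by rewrite mulr_ge0 ?ltW //; lra.
have sq_le : (t * b) ^+ 2 / 2 <= expR (t * b).
  by have := expR_ge1Dxn 1 tb_ge0; rewrite (_ : 2`!%:R = 2 :> R) //; lra.
have CD : C * ((t * b) ^+ 2 / 2) = D * (t * t) by rewrite /D; ring.
have B_le := ler_norm B.
have lin_le : 1 + B * t <= (1 + `|B|) * t by nra.
have B_le_D : 1 + `|B| <= (t - 1) * D by rewrite -ratioK ler_pM2r //; lra.
have quad_ge : (1 + `|B|) * t <= D * (t * t) by nra.
have := sq_le; rewrite -(ler_pM2l C_gt0) CD; lra.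
Qed.

Lemma ball_half_mul_ge (R : realType) (l x0 x : R) : 0 <= l * x0 ->
  `|x0 - x| < `|x0| / 2 -> l * (x0 / 2) <= l * x.
Proof.
rewrite ltr_distlC => lx0_ge0 /andP[x_gt x_lt].
case: (ltgtP 0 x0) x_gt x_lt => [x0_gt0|x0_lt0|<-]; last by rewrite normr0; lra.
- have l_ge0 : 0 <= l by rewrite -(pmulr_lge0 _ x0_gt0).
  rewrite gtr0_norm // => x_gt _; nra.
- have l_le0 : l <= 0 by rewrite -(nmulr_lge0 _ x0_lt0).
  rewrite ltr0_norm // => _ x_lt; nra.
Qed.

Section Kernel.
Variables (R : realType) (k : R -> R).
Hypothesis k_cont : continuous k.
Hypothesis k_ge0 : forall x, 0 <= k x.

Lemma continuous_kexp l : continuous (fun x => k x * expR (l * x)).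
Proof.
move=> x; apply: cvgM; first exact: k_cont.
apply: continuous_comp; last exact: continuous_expR.
by apply: cvgM; [exact: cvg_cst | exact: cvg_id].
Qed.

Lemma kexp_ge0 l x : 0 <= k x * expR (l * x).
Proof. by rewrite mulr_ge0 ?expR_ge0. Qed.

Lemma kM0 : (\int[lebesgue_measure]_x (k x)%:E = 1%:E)%E -> kM k 0 = 1%:E.
Proof.
move=> k_mass; rewrite /kM -k_mass.
by apply: eq_integral => x _; rewrite mul0r expR0 mulr1.
Qed.

Lemma kM_ge0 l : (0%:E <= kM k l)%E.
Proof. by apply: integral_ge0 => x _; rewrite lee_fin kexp_ge0. Qed.

Lemma integrable_kernel_mean lam : 0 < lam ->
  (\int[lebesgue_measure]_x (k x * expR (lam * `|x|))%:E < +oo)%E ->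
  lebesgue_measure.-integrable setT (EFin \o (fun x => k x * x)).
Proof.
move=> lam_gt0 kexp_fin.
have kexp_int : lebesgue_measure.-integrable setT
    (EFin \o (fun x => k x * expR (lam * `|x|))).
  apply: integrable_continuous_ge0 kexp_fin => [x|x]; last first.
    by rewrite mulr_ge0 ?expR_ge0.
  apply: cvgM; first exact: k_cont.
  apply: continuous_comp; last exact: continuous_expR.
  by apply: cvgM; [exact: cvg_cst | exact: norm_continuous].
apply: (le_integrable measurableT _ _ (integrableZl measurableT lam^-1 kexp_int)).
  apply/measurable_EFinP; apply: continuous_measurable_fun => x.
  by apply: cvgM; [exact: k_cont | exact: cvg_id].
(* [|k x * x| <= k x e^{lam |x|} / lam] since [lam |x| <= e^{lam |x|}] *)
move=> x _; rewrite /= lee_fin [leRHS]ger0_norm; last first.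
  by rewrite mulr_ge0 ?mulr_ge0 ?expR_ge0 // invr_ge0 ltW.
rewrite normrM (ger0_norm (k_ge0 x)) mulrCA ler_wpM2l // ler_pdivlMl //.
by have := expR_ge1Dx (lam * `|x|); lra.
Qed.

Lemma kM_ge_tangent : (\int[lebesgue_measure]_x (k x)%:E = 1%:E)%E ->
  (exists2 lam : R, 0 < lam &
     (\int[lebesgue_measure]_x (k x * expR (lam * `|x|))%:E < +oo)%E) ->
  forall l, ((1 + l * Jk k)%:E <= kM k l)%E.
Proof.
move=> k_mass [lam lam_gt0 kexp_fin] l.
have k_int : lebesgue_measure.-integrable setT (EFin \o k).
  by apply: integrable_continuous_ge0 => //; rewrite k_mass ltry.
have kx_int := integrable_kernel_mean lam_gt0 kexp_fin.
have [kM_fin|] := ltP (kM k l) +oo%E; last by rewrite leye_eq => /eqP ->; exact: leey.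
have kexp_int := integrable_continuous_ge0 (@continuous_kexp l) (kexp_ge0 l) kM_fin.
have -> : (1 + l * Jk k)%:E =
    (\int[lebesgue_measure]_x ((k x)%:E + l%:E * (k x * x)%:E))%E.
  rewrite integralD ?integralZl //; last exact: integrableZl.
  by rewrite k_mass /Jk /Rintegral EFinD EFinM fineK ?integrable_fin_num.
apply: le_integral => //; first by apply: integrableD => //; exact: integrableZl.
move=> x _; rewrite -EFinM -EFinD lee_fin mulrCA -{1}(mulr1 (k x)) -mulrDr.
by rewrite ler_wpM2l // expR_ge1Dx.
Qed.

Lemma kernel_ge_half_near x0 : 0 < k x0 ->
  exists2 eta, 0 < eta & forall x, `|x0 - x| < eta -> k x0 / 2 <= k x.
Proof.
move=> kx0_gt0; have half_gt0 : 0 < k x0 / 2 by rewrite divr_gt0.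
have /cvgrPdist_lt/(_ _ half_gt0)/nbhs_ballP[eta eta_gt0 k_near] := @k_cont x0.
exists eta => // x /k_near; rewrite /= ltr_distlC => /andP[? ?]; lra.
Qed.

Lemma kM_ge_exp x0 : x0 != 0 -> 0 < k x0 ->
  exists2 C, 0 < C & forall l, 0 <= l * x0 ->
    ((C * expR (l * (x0 / 2)))%:E <= kM k l)%E.
Proof.
move=> x0_neq0 kx0_gt0.
have [eta eta_gt0 k_near] := kernel_ge_half_near kx0_gt0.
pose r := Num.min eta (`|x0| / 2).
have r_gt0 : 0 < r by rewrite lt_min eta_gt0 divr_gt0 ?normr_gt0.
have mB : measurable (ball x0 r) by rewrite ball_itv; exact: measurable_itv.
exists (k x0 / 2 * r *+ 2) => [|l lx0_ge0].
  by rewrite mulrn_wgt0 // mulr_gt0 // divr_gt0.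
(* On [ball x0 r], [k >= k x0 / 2] and [l x >= l x0 / 2]. *)
pose c := k x0 / 2 * expR (l * (x0 / 2)).
have -> : ((k x0 / 2 * r *+ 2 * expR (l * (x0 / 2)))%:E =
    \int[lebesgue_measure]_(x in ball x0 r) (cst c%:E) x)%E.
  rewrite integral_cst //; transitivity (c%:E * (r *+ 2)%:E)%E.
    by rewrite -EFinM /c; congr EFin; ring.
  by congr (_ * _)%E; exact/esym/lebesgue_measure_ball/ltW.
have kexp_meas : measurable_fun setT (EFin \o (fun x => k x * expR (l * x))).
  by apply/measurable_EFinP; apply: continuous_measurable_fun; exact: continuous_kexp.
have kexp_nng x : [set: R] x -> (0%:E <= (k x * expR (l * x))%:E)%E.
  by rewrite lee_fin kexp_ge0.
apply: (le_trans _ (ge0_subset_integral lebesgue_measure mB measurableT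
  kexp_meas kexp_nng (subsetT _))).
apply: ge0_le_integral => //.
- by move=> x _; rewrite lee_fin mulr_ge0 ?divr_ge0 ?expR_ge0 ?ltW.
- exact: measurable_funTS.
- move=> x x_near; rewrite lee_fin /c.
  apply: ler_pM; [by rewrite divr_ge0 ?ltW | exact: expR_ge0 | |].
    by apply: k_near; apply: lt_le_trans x_near _; rewrite ge_min lexx.
  rewrite ler_expR; apply: ball_half_mul_ge => //.
  by apply: lt_le_trans x_near _; rewrite ge_min lexx orbT.
Qed.

Lemma kM_superlinearP : (exists2 x1 : R, 0 < x1 & 0 < k x1) ->
  forall B, exists2 L, 0 < L & forall l, L <= l -> ((1 + B * l)%:E <= kM k l)%E.
Proof.
move=> [x1 x1_gt0 kx1_gt0] B.
have [C C_gt0 kM_ge] := kM_ge_exp (lt0r_neq0 x1_gt0) kx1_gt0.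
have half_gt0 : 0 < x1 / 2 by rewrite divr_gt0.
have [L L_gt0 exp_ge] := expR_superlinear B C_gt0 half_gt0.
exists L => // l Ll; apply: (le_trans _ (kM_ge l _)); first by rewrite lee_fin exp_ge.
by rewrite mulr_ge0 ?ltW //; exact: lt_le_trans Ll.
Qed.

Lemma kM_superlinearN : (exists2 x2 : R, x2 < 0 & 0 < k x2) ->
  forall B, exists2 L, 0 < L & forall l, l <= - L -> ((1 - B * l)%:E <= kM k l)%E.
Proof.
move=> [x2 x2_lt0 kx2_gt0] B.
have [C C_gt0 kM_ge] := kM_ge_exp (ltr0_neq0 x2_lt0) kx2_gt0.
have mhalf_gt0 : 0 < - (x2 / 2) by rewrite oppr_gt0 pmulr_llt0.
have [L L_gt0 exp_ge] := expR_superlinear B C_gt0 mhalf_gt0.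
exists L => // l lL; apply: (le_trans _ (kM_ge l _)).
  by rewrite lee_fin; move: (exp_ge (- l)); rewrite mulrNN mulrN lerNr; apply.
by rewrite -mulrNN mulr_ge0 ?oppr_ge0 ?ltW //; lra.
Qed.

Lemma kM_moment_profile :
  (\int[lebesgue_measure]_x (k x)%:E = 1%:E)%E ->
  (exists2 lam : R, 0 < lam &
     (\int[lebesgue_measure]_x (k x * expR (lam * `|x|))%:E < +oo)%E) ->
  (exists2 x1 : R, 0 < x1 & 0 < k x1) ->
  (exists2 x2 : R, x2 < 0 & 0 < k x2) ->
  moment_profile (kM k) (Jk k).
Proof.
move=> k_mass k_expmom k_pos k_neg; split.
- exact: kM0.
- exact: kM_ge0.
- exact: kM_ge_tangent.
- exact: kM_superlinearN.
- exact: kM_superlinearP.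
Qed.

End Kernel.

Theorem theorem2p4 (R : realType) (k f fp : R -> R) :
  continuous k ->
  (forall x, 0 <= k x) ->
  (\int[lebesgue_measure]_x (k x)%:E = 1%:E)%E ->
  (exists2 lam : R, 0 < lam &
     (\int[lebesgue_measure]_x (k x * expR (lam * `|x|))%:E < +oo)%E) ->
  (exists2 x1 : R, 0 < x1 & 0 < k x1) ->
  (exists2 x2 : R, x2 < 0 & 0 < k x2) ->
  C1_01 f fp ->
  f 0 = 0 -> f 1 = 0 ->
  (forall u, 0 < u < 1 -> 0 < f u) ->
  0 < fp 0 ->
  (forall u, 0 < u < 1 -> f u <= fp 0 * u) ->
  let cl := c_left k (fp 0) in
  let cr := c_right k (fp 0) in
  let E := Ek k in
  [/\ fp 0 < E -> (0%:E < cl /\ cl < cr)%E,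
      E = fp 0 -> (cl = 0%:E /\ cl < cr)%E,
      - fp 0 < E < fp 0 -> (cl < 0%:E /\ 0%:E < cr)%E,
      E = - fp 0 -> (cl < cr /\ cr = 0%:E)%E
    & E < - fp 0 -> (cl < cr /\ cr < 0%:E)%E].
Proof.
(* Only [a = f'(0)] enters the speeds. *)
move=> k_cont k_ge0 k_mass k_expmom k_pos k_neg _ _ _ _ fp0_gt0 _.
exact: moment_speed_regimes fp0_gt0
  (kM_moment_profile k_cont k_ge0 k_mass k_expmom k_pos k_neg).
Qed.
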